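(* Let $d\ge2$ and let $P$ be a $d$-dimensional exceptional simplex. Then $\mu^F(P)=d-\tfrac12$.
   Context: For a $d$-dimensional rational polytope $P\subseteq\mathbb{R}^d$ and $a\in(\mathbb{Z}^d)^*$ let $h_P(a)=\min_{x\in P}\langle a,x\rangle$. For $s>0$ the Fine adjoint polytope is $P^{F(s)}=\{x\in\mathbb{R}^d : \langle a,x\rangle\ge h_P(a)+s \text{ for all } a\in(\mathbb{Z}^d)^*\setminus\{0\}\}$. The Fine $\mathbb{Q}$-codegree is $\mu^F(P)=(\sup\{s>0 : P^{F(s)}\neq\emptyset\})^{-1}$. A $d$-dimensional lattice polytope $P$ is a lattice pyramid over a lattice polytope $P'\subseteq\mathbb{R}^{d-1}$ if $P$ is unimodularly equivalent to $\operatorname{conv}(P'\times\{1\},\{0\})\subseteq\mathbb{R}^{d-1}\times\mathbb{R}$. For $d\ge2$, a $d$-dimensional lattice polytope is an exceptional simplex if it is (up to unimodular equivalence) a $(d-2)$-fold iterated lattice pyramid over $2\Delta_2=\operatorname{conv}\{(0,0),(2,0),(0,2)\}$. *)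

From HB Require Import structures.
From mathcomp Require Import all_boot all_order all_algebra.
From mathcomp Require Import classical_sets reals.
Set Implicit Arguments. Unset Strict Implicit. Unset Printing Implicit Defensive.
Import Order.TTheory GRing.Theory Num.Theory.
Local Open Scope ring_scope.
Local Open Scope classical_set_scope.

Section Defs.
Variable R : realType.

Definition intv {d : nat} (a : 'rV[int]_d) : 'rV[R]_d := map_mx (fun z : int => z%:~R) a.
Definition intm {d : nat} (U : 'M[int]_d) : 'M[R]_d := map_mx (fun z : int => z%:~R) U.

Definition dotp {d : nat} (a x : 'rV[R]_d) : R := \sum_(i < d) a 0 i * x 0 i.

(* h_P(a) = min_{x in P} <a,x>  (an infimum, attained for polytopes) *)
Definition hP {d : nat} (P : set 'rV[R]_d) (a : 'rV[int]_d) : R :=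
  inf [set dotp (intv a) x | x in P].

Definition fine_adjoint {d : nat} (P : set 'rV[R]_d) (s : R) : set 'rV[R]_d :=
  [set x | forall a : 'rV[int]_d, a != 0 -> hP P a + s <= dotp (intv a) x].

Definition muF {d : nat} (P : set 'rV[R]_d) : R :=
  (sup [set s : R | 0 < s /\ fine_adjoint P s !=set0])^-1.

Definition conv {d : nat} (A : set 'rV[R]_d) : set 'rV[R]_d :=
  [set x | exists (n : nat) (v : 'I_n -> 'rV[R]_d) (w : 'I_n -> R),
     (forall i, A (v i)) /\ (forall i, 0 <= w i) /\ \sum_(i < n) w i = 1 /\
     x = \sum_(i < n) w i *: v i].

(* lattice pyramid conv(P' x {1}, {0}); the new coordinate is put first,
   which differs from the paper's convention only by a unimodular map *)
Definition pyramid {k : nat} (P' : set 'rV[R]_k) : set 'rV[R]_(1 + k) :=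
  conv ([set row_mx (const_mx 1 : 'rV[R]_1) y | y in P'] `|` [set 0]).

Definition two_Delta2 : set 'rV[R]_2 :=
  conv [set 0; \row_(i < 2) (if (i : nat) == 0%N then 2 else 0);
               \row_(i < 2) (if (i : nat) == 0%N then 0 else 2)].

Fixpoint iter_pyramid (n : nat) : set 'rV[R]_(n.+2) :=
  match n with
  | 0 => two_Delta2
  | n'.+1 => @pyramid n'.+2 (@iter_pyramid n')
  end.

Definition unimod_equiv {d : nat} (P Q : set 'rV[R]_d) : Prop :=
  exists (U : 'M[int]_d) (b : 'rV[int]_d),
    U \in unitmx /\ P = [set x *m intm U + intv b | x in Q].

Definition exceptional_simplex (n : nat) (P : set 'rV[R]_(n.+2)) : Prop :=
  unimod_equiv P (@iter_pyramid n).

End Defs.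

(* The support function of the lattice pyramid Pyr(P) = conv(P x {1}, 0) at
   (c, b) is min(c + h_P(b), 0), and h_P(b) is an integer.  Testing (t, y) against
   the directions (1, 0), (-1, 0) and (-h_P(b), b) shows that (t, y) lies in
   Pyr(P)^{F(s)} only if s <= t <= 1 - s and y/t lies in P^{F(s/t)}; conversely
   (t, t y) lies in Pyr(P)^{F(s)} as soon as s <= min(t, 1 - t, t r) and y lies in
   P^{F(r)}.  So if P^{F(s)} is nonempty exactly for s <= sigma <= 1, then
   Pyr(P)^{F(s)} is nonempty exactly for s <= sigma / (1 + sigma), i.e. mu^F grows by
   one.  For 2 Delta_2 the threshold is 2/3 (facets x >= 0, y >= 0, x + y <= 2 and
   the point (2/3, 2/3)), giving mu^F = 3/2 + (d - 2); unimodular maps permute the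
   nonzero dual lattice vectors, so they preserve mu^F. *)

From HB Require Import structures.
From mathcomp Require Import all_boot all_order all_algebra.
From mathcomp Require Import classical_sets reals.
From mathcomp Require Import zify ring lra.
Import Order.TTheory GRing.Theory Num.Theory.
Local Open Scope ring_scope.
Local Open Scope classical_set_scope.
Set Implicit Arguments. Unset Strict Implicit. Unset Printing Implicit Defensive.

Section FineCodegree.
Variable R : realType.

Lemma dotpC d (a x : 'rV[R]_d) : dotp a x = dotp x a.
Proof. by apply: eq_bigr => i _; rewrite mulrC. Qed.

Lemma dotpDr d (a x y : 'rV[R]_d) : dotp a (x + y) = dotp a x + dotp a y.
Proof. by rewrite /dotp -big_split; apply: eq_bigr => i _; rewrite mxE mulrDr. Qed.

Lemma dotpZr d (a x : 'rV[R]_d) c : dotp a (c *: x) = c * dotp a x.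
Proof. by rewrite /dotp mulr_sumr; apply: eq_bigr => i _; rewrite mxE mulrCA. Qed.

Lemma dotp0r d (a : 'rV[R]_d) : dotp a 0 = 0.
Proof. by rewrite /dotp big1 // => i _; rewrite mxE mulr0. Qed.

Lemma dotp_sumr d (a : 'rV[R]_d) m (F : 'I_m -> 'rV[R]_d) :
  dotp a (\sum_(i < m) F i) = \sum_(i < m) dotp a (F i).
Proof.
elim: m F => [|m IH] F; first by rewrite !big_ord0 dotp0r.
by rewrite !big_ord_recr /= dotpDr IH.
Qed.

Lemma dotp_mulmx d (a x : 'rV[R]_d) (M : 'M[R]_d) :
  dotp a (x *m M) = dotp (a *m M^T) x.
Proof.
have dotpE (u v : 'rV[R]_d) : dotp u v = (u *m v^T) 0 0.
  by rewrite /dotp mxE; apply: eq_bigr => i _; rewrite mxE.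
by rewrite !dotpE trmx_mul mulmxA.
Qed.

Lemma dotp_row_mx k (a1 x1 : 'rV[R]_1) (a x : 'rV[R]_k) :
  dotp (row_mx a1 a) (row_mx x1 x) = a1 0 0 * x1 0 0 + dotp a x.
Proof.
rewrite /dotp big_split_ord /= big_ord1; congr (_ + _); first by rewrite !row_mxEl.
by apply: eq_bigr => i _; rewrite !row_mxEr.
Qed.

Definition dotp_min d (P : set 'rV[R]_d) (g : 'rV[R]_d) (m : R) :=
  (exists2 x, P x & dotp g x = m) /\ (forall x, P x -> m <= dotp g x).

Lemma hP_dotp_min d (P : set 'rV[R]_d) a m : dotp_min P (intv R a) m -> hP P a = m.
Proof.
move=> [[x Px xm] minP]; apply/le_anti/andP; split.
  by apply: ge_inf; [exists m => _ [y Py <-]; apply: minP | exists x].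
by apply: lb_le_inf; [exists m, x | move=> _ [y Py <-]; apply: minP].
Qed.

Lemma dotp_min1 d (x g : 'rV[R]_d) : dotp_min [set x] g (dotp g x).
Proof. by split; [exists x | move=> _ ->]. Qed.

Lemma dotp_minU d (A B : set 'rV[R]_d) g mA mB :
  dotp_min A g mA -> dotp_min B g mB -> dotp_min (A `|` B) g (Num.min mA mB).
Proof.
move=> [[xA Ax <-] minA] [[xB Bx <-] minB]; split.
  by case: leP => _; [exists xA; [left|] | exists xB; [right|]].
by move=> y [Ay|By]; rewrite ge_min; apply/orP; [left; apply: minA | right; apply: minB].
Qed.

Lemma dotp_min_conv d (A : set 'rV[R]_d) g m : dotp_min A g m -> dotp_min (conv A) g m.
Proof.
move=> [[x Ax xm] minA]; split.
  exists x => //; exists 1%N, (fun=> x), (fun=> 1).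
  by do !split=> //; rewrite !big_ord1 ?scale1r.
move=> _ [k [v [w [Av [w_ge0 [w1 ->]]]]]].
rewrite dotp_sumr -[m]mul1r -w1 mulr_suml.
by apply: ler_sum => i _; rewrite dotpZr ler_wpM2l ?minA.
Qed.

Lemma dotp_min_affine d (P : set 'rV[R]_d) (M : 'M[R]_d) c g m :
  dotp_min P (g *m M^T) m -> dotp_min [set x *m M + c | x in P] g (m + dotp g c).
Proof.
move=> [[x Px <-] minP]; split.
  by exists (x *m M + c); [exists x | rewrite dotpDr dotp_mulmx].
by move=> _ [y Py <-]; rewrite dotpDr dotp_mulmx lerD2r minP.
Qed.

Definition integral_support d (P : set 'rV[R]_d) :=
  forall a : 'rV[int]_d, exists m : int, dotp_min P (intv R a) m%:~R.

Lemma dotp_intv0 d (y : 'rV[R]_d) : dotp (intv R 0) y = 0.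
Proof. by rewrite /intv map_mx0 dotpC dotp0r. Qed.

Lemma hP0 d (P : set 'rV[R]_d) : integral_support P -> hP P 0 = 0.
Proof.
move=> Pint; have [m Pm] := Pint 0; rewrite (hP_dotp_min Pm).
by case: Pm => -[x _ <-] _; rewrite dotp_intv0.
Qed.


Definition fine_params d (P : set 'rV[R]_d) :=
  [set s : R | 0 < s /\ fine_adjoint P s !=set0].

Lemma sup_greatest (E : set R) x : E x -> ubound E x -> sup E = x.
Proof.
move=> Ex ubx; apply/le_anti/andP; split; first by apply: ge_sup => //; exists x.
by apply: ub_le_sup => //; exists x.
Qed.

Lemma intvM d (a : 'rV[int]_d) (U : 'M[int]_d) : intv R (a *m U) = intv R a *m intm R U.
Proof. by rewrite /intv /intm map_mxM. Qed.

Lemma intm_tr d (U : 'M[int]_d) : intm R U^T = (intm R U)^T.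
Proof. by rewrite /intm map_trmx. Qed.

Lemma fine_adjoint_unimod d (P : set 'rV[R]_d) (U : 'M[int]_d) (b : 'rV[int]_d) s z :
  U \in unitmx -> (forall a : 'rV[int]_d, exists m, dotp_min P (intv R a) m) ->
  fine_adjoint [set x *m intm R U + intv R b | x in P] s (z *m intm R U + intv R b)
  <-> fine_adjoint P s z.
Proof.
move=> Uunit Pmin.
have hP_image a : hP [set x *m intm R U + intv R b | x in P] a =
                  hP P (a *m U^T) + dotp (intv R a) (intv R b).
  have [m Pm] := Pmin (a *m U^T).
  rewrite (hP_dotp_min Pm); apply/hP_dotp_min/dotp_min_affine.
  by rewrite -intm_tr -intvM.
have dotp_image a : dotp (intv R a) (z *m intm R U + intv R b) =
                    dotp (intv R (a *m U^T)) z + dotp (intv R a) (intv R b).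
  by rewrite dotpDr dotp_mulmx intvM intm_tr.
have UTK (a : 'rV[int]_d) : a *m (invmx U)^T *m U^T = a.
  by rewrite -mulmxA -trmx_mul mulmxV // trmx1 mulmx1.
have UTVK (a : 'rV[int]_d) : a *m U^T *m (invmx U)^T = a.
  by rewrite -mulmxA -trmx_mul mulVmx // trmx1 mulmx1.
split=> Fz a a_neq0.
  have a'_neq0 : a *m (invmx U)^T != 0.
    by apply: contraNneq a_neq0 => a'0; rewrite -[a]UTK a'0 mul0mx.
  by have := Fz _ a'_neq0; rewrite hP_image dotp_image UTK addrAC lerD2r.
rewrite hP_image dotp_image addrAC lerD2r; apply: Fz.
by apply: contraNneq a_neq0 => aU0; rewrite -[a]UTVK aU0 mul0mx.
Qed.

Lemma fine_params_unimod d (P Q : set 'rV[R]_d) :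
  (forall a : 'rV[int]_d, exists m, dotp_min Q (intv R a) m) ->
  unimod_equiv P Q -> fine_params P = fine_params Q.
Proof.
move=> Qmin [U [b [Uunit ->]]]; apply/seteqP; split=> s [s_gt0 [z Fz]]; split=> //.
  exists ((z - intv R b) *m intm R (invmx U)).
  apply/(@fine_adjoint_unimod _ _ U b _ _ Uunit Qmin).
  by rewrite -mulmxA /intm -map_mxM mulVmx // map_mx1 mulmx1 subrK.
by exists (z *m intm R U + intv R b); apply/fine_adjoint_unimod.
Qed.

Local Notation row_cons c b := (row_mx (const_mx c : 'rV_1) b).

Lemma intr_min (x y : int) : (Num.min x y)%:~R = Num.min x%:~R y%:~R :> R.
Proof. by rewrite !minEle ler_int; case: ifP. Qed.

Lemma intv_row_cons k (c : int) (b : 'rV[int]_k) :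
  intv R (row_cons c b) = row_cons c%:~R (intv R b).
Proof. by rewrite /intv map_row_mx map_const_mx. Qed.

Lemma dotp_row_cons k (c t : R) (b y : 'rV[R]_k) :
  dotp (row_cons c b) (row_cons t y) = c * t + dotp b y.
Proof. by rewrite dotp_row_mx !mxE. Qed.

Lemma row_cons_split (T : Type) k (x : 'rV[T]_(1 + k)) :
  x = row_cons (lsubmx x 0 0) (rsubmx x).
Proof.
rewrite -{1}[x]hsubmxK; congr row_mx.
by apply/rowP => i; rewrite ord1 !mxE.
Qed.

Lemma row_cons_eq0 (V : nmodType) k (c : V) (b : 'rV[V]_k) :
  (row_cons c b == 0) = (c == 0) && (b == 0).
Proof.
rewrite row_mx_eq0; congr andb; apply/eqP/eqP => [/rowP/(_ 0)|->]; rewrite ?mxE //.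
Qed.

Lemma dotp_min_pyramid k (P : set 'rV[R]_k) (c : R) (b : 'rV[R]_k) m :
  dotp_min P b m -> dotp_min (pyramid P) (row_cons c b) (Num.min (c + m) 0).
Proof.
move=> [[y Py ym] minP]; apply/dotp_min_conv/dotp_minU; last first.
  by rewrite -(dotp0r (row_cons c b)); apply: dotp_min1.
split; first by exists (row_cons 1 y); [exists y | rewrite dotp_row_cons mulr1 ym].
by move=> _ [z Pz <-]; rewrite dotp_row_cons mulr1 lerD2l minP.
Qed.

Lemma integral_support_pyramid k (P : set 'rV[R]_k) :
  integral_support P -> integral_support (pyramid P).
Proof.
move=> Pint a; have [m Pm] := Pint (rsubmx a).
exists (Num.min (lsubmx a 0 0 + m) 0); rewrite intr_min rmorphD /=.
have -> : intv R a = row_cons (lsubmx a 0 0)%:~R (intv R (rsubmx a)).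
  by rewrite -intv_row_cons -row_cons_split.
exact: dotp_min_pyramid.
Qed.

Lemma hP_pyramid k (P : set 'rV[R]_k) (c : int) b : integral_support P ->
  hP (pyramid P) (row_cons c b) = Num.min (c%:~R + hP P b) 0.
Proof.
move=> Pint; have [m Pm] := Pint b; rewrite (hP_dotp_min Pm).
by apply: hP_dotp_min; rewrite intv_row_cons; apply: dotp_min_pyramid.
Qed.

Lemma fine_adjoint_pyramid_base k (P : set 'rV[R]_k) s t y :
  integral_support P -> 0 < s -> fine_adjoint (pyramid P) s (row_cons t y) ->
  [/\ s <= t, s <= 1 - t & fine_adjoint P (s / t) (t^-1 *: y)].
Proof.
move=> Pint s_gt0 Fx.
have F c b : (c != 0) || (b != 0) ->
    Num.min (c%:~R + hP P b) 0 + s <= c%:~R * t + dotp (intv R b) y.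
  rewrite -negb_and -row_cons_eq0 => /Fx.
  by rewrite hP_pyramid // intv_row_cons dotp_row_cons.
have s_le_t : s <= t.
  by have := F 1 0 isT; rewrite hP0 // dotp_intv0 !addr0 rmorph1 mul1r min_r ?ler01 // add0r.
have s_le_1t : s <= 1 - t.
  by have := F (-1) 0 isT; rewrite hP0 // dotp_intv0 !addr0 rmorphN1 min_l ?lerN10 //; lra.
split=> // b b_neq0; have t_gt0 : 0 < t by apply: lt_le_trans s_le_t.
have [m Pm] := Pint b; rewrite (hP_dotp_min Pm) dotpZr.
have /F : (- m != 0) || (b != 0) by rewrite b_neq0 orbT.
rewrite (hP_dotp_min Pm) rmorphN addNr min_l // add0r => Fb.
rewrite -(ler_pM2l t_gt0) mulrDr mulrCA divff ?gt_eqF // mulr1 mulrA divff ?gt_eqF //.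
lra.
Qed.

Lemma fine_adjoint_pyramid_lift k (P : set 'rV[R]_k) s t r y :
  integral_support P -> 0 < s -> s <= t -> s <= 1 - t -> s <= t * r ->
  fine_adjoint P r y -> fine_adjoint (pyramid P) s (row_cons t (t *: y)).
Proof.
move=> Pint s_gt0 s_le_t s_le_1t s_le_tr Fy a.
rewrite (row_cons_split a); move: (lsubmx a 0 0) (rsubmx a) => c b cb_neq0.
rewrite hP_pyramid // intv_row_cons dotp_row_cons dotpZr.
have [b0|b_neq0] := eqVneq b 0.
  have c_neq0 : c != 0 by move: cb_neq0; rewrite row_cons_eq0 b0 eqxx andbT.
  rewrite b0 hP0 // dotp_intv0 !addr0 mulr0.
  have [c_ge1|c_leN1] : 1 <= c \/ c <= -1 by lia.
    have c1 : (1 : R) <= c%:~R by rewrite -(ler_int R) in c_ge1.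
    rewrite min_r; [nra | lra].
  have c1 : c%:~R <= (-1 : R) by rewrite -(ler_int R) in c_leN1.
  rewrite min_l; [nra | lra].
have Fb := Fy _ b_neq0.
have min_le : Num.min (c%:~R + hP P b) 0 <= t * (c%:~R + hP P b).
  by have [u_le0|u_gt0] := lerP (c%:~R + hP P b) 0; nra.
nra.
Qed.

Definition fine_threshold d (P : set 'rV[R]_d) (sigma : R) :=
  fine_params P sigma /\ ubound (fine_params P) sigma.

Lemma fine_threshold_pyramid k (P : set 'rV[R]_k) sigma :
  integral_support P -> sigma <= 1 -> fine_threshold P sigma ->
  fine_threshold (pyramid P) (sigma / (1 + sigma)).
Proof.
move=> Pint sigma_le1 [[sigma_gt0 [y Fy]] sigma_ub].
have sigma1_gt0 : 0 < 1 + sigma by lra.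
split.
  split; first by rewrite divr_gt0.
  exists (row_cons (1 + sigma)^-1 ((1 + sigma)^-1 *: y)).
  have oneB : 1 - (1 + sigma)^-1 = sigma / (1 + sigma) by field; lra.
  apply: (fine_adjoint_pyramid_lift Pint _ _ _ _ Fy).
  - by rewrite divr_gt0.
  - by rewrite -[X in _ <= X]mul1r ler_pM2r ?invr_gt0.
  - by rewrite oneB.
  - by rewrite mulrC.
move=> s [s_gt0 [x]]; rewrite (row_cons_split x).
move/(fine_adjoint_pyramid_base Pint s_gt0) => [s_le_t s_le_1t Ft].
have t_gt0 : 0 < lsubmx x 0 0 by apply: lt_le_trans s_le_t.
have /sigma_ub : fine_params P (s / lsubmx x 0 0).
  by split; [rewrite divr_gt0 | exists ((lsubmx x 0 0)^-1 *: rsubmx x)].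
rewrite ler_pdivrMr // ler_pdivlMr // => st_le.
have : sigma * lsubmx x 0 0 <= sigma * (1 - s) by apply: ler_wpM2l; lra.
lra.
Qed.

Lemma dotp2 (g x : 'rV[R]_2) : dotp g x = g 0 0 * x 0 0 + g 0 1 * x 0 1.
Proof.
by rewrite /dotp big_ord_recl big_ord1; congr (g 0 _ * x 0 _ + g 0 _ * x 0 _); apply: val_inj.
Qed.

Lemma dotp_min_two_Delta2 (g : 'rV[R]_2) :
  dotp_min (@two_Delta2 R) g (Num.min (Num.min 0 (2 * g 0 0)) (2 * g 0 1)).
Proof.
have vertex x m : dotp g x = m -> dotp_min [set x] g m by move=> <-; apply: dotp_min1.
apply/dotp_min_conv/dotp_minU; first apply: dotp_minU.
all: by apply: vertex; rewrite dotp2 !mxE /=; lra.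
Qed.

Lemma integral_support_two_Delta2 : integral_support (@two_Delta2 R).
Proof.
move=> a; exists (Num.min (Num.min 0 (2 * a 0 0)) (2 * a 0 1)).
have := dotp_min_two_Delta2 (intv R a); rewrite !mxE.
by rewrite !intr_min rmorph0 !rmorphM.
Qed.

Lemma fine_adjoint_two_Delta2E s x :
  fine_adjoint (@two_Delta2 R) s x <->
  forall a0 a1 : int, (a0 != 0) || (a1 != 0) ->
    Num.min (Num.min 0 (2 * a0%:~R)) (2 * a1%:~R) + s <= a0%:~R * x 0 0 + a1%:~R * x 0 1.
Proof.
have hP2 a : hP (@two_Delta2 R) a =
             Num.min (Num.min 0 (2 * (a 0 0)%:~R)) (2 * (a 0 1)%:~R).
  by have := dotp_min_two_Delta2 (intv R a); rewrite !mxE => /hP_dotp_min.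
split=> Fx => [a0 a1 a_neq0 | a a_neq0].
  pose a : 'rV[int]_2 := \row_(i < 2) (if (i : nat) == 0%N then a0 else a1).
  have /Fx : a != 0.
    apply: contraTneq a_neq0 => /rowP a0E.
    by have := a0E 0; have := a0E 1; rewrite !mxE /= => -> ->; rewrite eqxx.
  by rewrite hP2 dotp2 !mxE.
rewrite hP2 dotp2 !mxE; apply: Fx.
apply: contraNT a_neq0; rewrite negb_or !negbK => /andP[/eqP a0 /eqP a1].
apply/eqP/rowP => -[[|[|//]] i_lt]; rewrite mxE.
  by rewrite -a0; congr (a 0 _); apply: val_inj.
by rewrite -a1; congr (a 0 _); apply: val_inj.
Qed.

Lemma fine_threshold_two_Delta2 : fine_threshold (@two_Delta2 R) (2 / 3).
Proof.
split.
  split; first by lra.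
  exists (const_mx (2 / 3)); apply/fine_adjoint_two_Delta2E => a0 a1 a_neq0.
  have : 3 * Num.min (Num.min 0 (2 * a0)) (2 * a1) + 2 <= 2 * (a0 + a1) by lia.
  rewrite -(ler_int R) rmorphD !rmorphM /= !intr_min /= !rmorphM /= rmorph0.
  by rewrite [(a0 + a1)%:~R]rmorphD !mxE; lra.
move=> s [s_gt0 [x /fine_adjoint_two_Delta2E Fx]].
have two_ge0 : (0 : R) <= 2 by [].
have mtwo_le0 : (-2 : R) <= 0 by rewrite oppr_le0.
have := Fx 1 0 isT; rewrite rmorph1 rmorph0 mulr1 mulr0 (min_l two_ge0) minxx.
have := Fx 0 1 isT; rewrite rmorph1 rmorph0 mulr1 mulr0 minxx (min_l two_ge0).
have := Fx (-1) (-1) isT; rewrite rmorphN1 mulrN1 (min_r mtwo_le0) minxx.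
lra.
Qed.

Lemma integral_support_iter_pyramid n : integral_support (@iter_pyramid R n).
Proof.
elim: n => [|n IH]; first exact: integral_support_two_Delta2.
exact: integral_support_pyramid.
Qed.

Lemma fine_threshold_iter_pyramid n :
  fine_threshold (@iter_pyramid R n) (2 / (2 * n%:R + 3)).
Proof.
elim: n => [|n IH]; first by rewrite mulr0 add0r; exact: fine_threshold_two_Delta2.
have n_ge0 : (0 : R) <= n%:R by [].
have -> : 2 / (2 * n.+1%:R + 3) = 2 / (2 * n%:R + 3) / (1 + 2 / (2 * n%:R + 3)) :> R.
  by rewrite -natr1; field; lra.
apply: fine_threshold_pyramid IH => //; first exact: integral_support_iter_pyramid.
by rewrite ler_pdivrMr; lra.
Qed.

End FineCodegree.

Theorem mainTheorem9 (R : realType) (n : nat) (P : set 'rV[R]_(n.+2)) :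
  exceptional_simplex P -> muF P = (n.+2)%:R - 2^-1.
Proof.
move=> P_exceptional.
have [sigma_in sigma_ub] := fine_threshold_iter_pyramid R n.
rewrite /muF -/(fine_params P) (fine_params_unimod _ P_exceptional); last first.
  by move=> a; have [m Pm] := integral_support_iter_pyramid R a; exists m%:~R.
have n_ge0 : (0 : R) <= n%:R by [].
by rewrite (sup_greatest sigma_in sigma_ub) invf_div -addn2 natrD; field; lra.
Qed.
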